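(* Let $\iota:\emptyset\to\{\bullet\}$, let $M:D\to E$ be the map with $D=\{x,y,z,c\}$ having open sets $\emptyset,\{x,y,z\},D$, $E=\{u,v\}$ antidiscrete, $M(x)=M(y)=u$, $M(z)=M(c)=v$, and let $k:\{\bullet\}\to S$ send the point to the closed point $c$ of the Sierpinski space $S=\{o,c\}$ (open sets $\emptyset,\{o\},S$). Then, in $\mathrm{Top}$, $\{\iota\}^{rllrrll}=\{M\}^{ll}=\{k\}^l$, and this is the class of continuous maps with dense image.
   Context: For continuous maps $f:A\to B$, $g:C\to D'$, $f\pitchfork g$ means: for all continuous $t:A\to C$, $b:B\to D'$ with $g\circ t=b\circ f$ there is continuous $d:B\to C$ with $d\circ f=t$, $g\circ d=b$. For a class $P$, $P^l=\{f: f\pitchfork g\ \forall g\in P\}$, $P^r=\{g: f\pitchfork g\ \forall f\in P\}$; for a word $w$ in $l,r$, $P^w$ applies these operations from left to right. *)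

From HB Require Import structures.
From mathcomp Require Import all_boot all_classical topology.
Set Implicit Arguments.
Unset Strict Implicit.
Unset Printing Implicit Defensive.
Local Open Scope classical_set_scope.

Record cmap : Type := CMap {
  csrc : topologicalType;
  ctgt : topologicalType;
  cfun : csrc -> ctgt;
  cfun_cont : continuous cfun }.
Arguments cfun c _ : clear implicits.
Arguments CMap {csrc ctgt cfun} _.

Definition mclass := cmap -> Prop.

Definition lifts (f g : cmap) : Prop :=
  forall (t : csrc f -> csrc g) (b : ctgt f -> ctgt g),
    continuous t -> continuous b ->
    cfun g \o t = b \o cfun f ->
    exists d : ctgt f -> csrc g,
      [/\ continuous d, d \o cfun f = t & cfun g \o d = b].

Definition lorth (P : mclass) : mclass := fun f => forall g, P g -> lifts f g.
Definition rorth (P : mclass) : mclass := fun g => forall f, P f -> lifts f g.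

Inductive letter := l_ | r_.
Definition orth (a : letter) := if a is l_ then lorth else rorth.

(** P^w : the letters of w are applied from left to right *)
Fixpoint orthw (P : mclass) (w : seq letter) : mclass :=
  if w is a :: w' then orthw (orth a P) w' else P.

Definition single (f : cmap) : mclass := fun g => g = f.

Definition same_class (P Q : mclass) : Prop := forall f, P f <-> Q f.

Definition dense_image : mclass := fun f => dense (range (cfun f)).

(** * Finite (Alexandrov) topologies given by the minimal open neighbourhood
      [U p] of each point: the open sets are the sets A with U p ⊆ A for p ∈ A *)

Definition alex_nbhs (T : Type) (U : T -> set T) (p : T) : set_system T :=
  fun A => U p `<=` A.

Lemma alex_filter (T : Type) (U : T -> set T) :
  (forall p, U p p) -> forall p, ProperFilter (alex_nbhs U p).
Proof.
move=> Upp p.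
have F : Filter (alex_nbhs U p).
  apply: Build_Filter.
  + by [].
  + by move=> A B HA HB q Uq; split; [apply: HA|apply: HB].
  + by move=> A B AB HA q Uq; apply: AB; apply: HA.
apply: (@Build_ProperFilter_ex _ _ _ F) => A H.
by exists p; apply: H.
Qed.

Lemma alex_singleton (T : Type) (U : T -> set T) :
  (forall p, U p p) -> forall p A, alex_nbhs U p A -> A p.
Proof. by move=> Upp p A H; apply: H. Qed.

Lemma alex_nbhs_nbhs (T : Type) (U : T -> set T) :
  (forall p q, U p q -> U q `<=` U p) ->
  forall p A, alex_nbhs U p A -> alex_nbhs U p (alex_nbhs U ^~ A).
Proof. by move=> tr p A H q Upq r Uqr; apply: H; apply: (tr p q). Qed.

Inductive emp : Set := .
Definition emp_to_void (e : emp) : void := match e with end.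
Definition void_to_emp (v : void) : emp := match v with end.
Lemma emp_K : cancel emp_to_void void_to_emp. Proof. by case. Qed.
HB.instance Definition _ := Countable.copy emp (can_type emp_K).
Definition U_emp (p : emp) : set emp := setT.
HB.instance Definition _ := hasNbhs.Build emp (alex_nbhs U_emp).
HB.instance Definition _ := Nbhs_isNbhsTopological.Build emp
  (@alex_filter _ U_emp (fun _ => I)) (@alex_singleton _ U_emp (fun _ => I))
  (@alex_nbhs_nbhs _ U_emp (fun _ _ _ _ _ => I)).

Inductive pt : Set := bullet.
Definition pt_to_unit (p : pt) : unit := tt.
Definition unit_to_pt (u : unit) : pt := bullet.
Lemma pt_K : cancel pt_to_unit unit_to_pt. Proof. by case. Qed.
HB.instance Definition _ := Countable.copy pt (can_type pt_K).
Definition U_pt (p : pt) : set pt := setT.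
HB.instance Definition _ := hasNbhs.Build pt (alex_nbhs U_pt).
HB.instance Definition _ := Nbhs_isNbhsTopological.Build pt
  (@alex_filter _ U_pt (fun _ => I)) (@alex_singleton _ U_pt (fun _ => I))
  (@alex_nbhs_nbhs _ U_pt (fun _ _ _ _ _ => I)).

(** ** D = {x,y,z,c} with open sets ∅, {x,y,z}, D *)
Inductive Dpt : Set := Dx | Dy | Dz | Dc.
Definition Dpt_enc (p : Dpt) : nat :=
  match p with Dx => 0 | Dy => 1 | Dz => 2 | Dc => 3 end.
Definition Dpt_dec (n : nat) : Dpt :=
  match n with 0 => Dx | 1 => Dy | 2 => Dz | _ => Dc end.
Lemma Dpt_K : cancel Dpt_enc Dpt_dec. Proof. by case. Qed.
HB.instance Definition _ := Countable.copy Dpt (can_type Dpt_K).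
Definition U_D (p : Dpt) : set Dpt :=
  match p with Dc => setT | _ => [set q | q <> Dc] end.
Lemma U_D_refl p : U_D p p. Proof. by case: p. Qed.
Lemma U_D_tr p q : U_D p q -> U_D q `<=` U_D p.
Proof.
by case: p; case: q => /= H r Hr //; exfalso; apply: H.
Qed.
HB.instance Definition _ := hasNbhs.Build Dpt (alex_nbhs U_D).
HB.instance Definition _ := Nbhs_isNbhsTopological.Build Dpt
  (alex_filter U_D_refl) (alex_singleton U_D_refl) (alex_nbhs_nbhs U_D_tr).

Inductive Ept : Set := Eu | Ev.
Definition Ept_enc (p : Ept) : bool := if p is Eu then true else false.
Definition Ept_dec (b : bool) : Ept := if b then Eu else Ev.
Lemma Ept_K : cancel Ept_enc Ept_dec. Proof. by case. Qed.
HB.instance Definition _ := Countable.copy Ept (can_type Ept_K).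
Definition U_E (p : Ept) : set Ept := setT.
HB.instance Definition _ := hasNbhs.Build Ept (alex_nbhs U_E).
HB.instance Definition _ := Nbhs_isNbhsTopological.Build Ept
  (@alex_filter _ U_E (fun _ => I)) (@alex_singleton _ U_E (fun _ => I))
  (@alex_nbhs_nbhs _ U_E (fun _ _ _ _ _ => I)).

(** ** Sierpinski space S = {o,c} with open sets ∅, {o}, S *)
Inductive Spt : Set := So | Sc.
Definition Spt_enc (p : Spt) : bool := if p is So then true else false.
Definition Spt_dec (b : bool) : Spt := if b then So else Sc.
Lemma Spt_K : cancel Spt_enc Spt_dec. Proof. by case. Qed.
HB.instance Definition _ := Countable.copy Spt (can_type Spt_K).
Definition U_S (p : Spt) : set Spt :=
  match p with So => [set So] | Sc => setT end.
Lemma U_S_refl p : U_S p p. Proof. by case: p. Qed.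
Lemma U_S_tr p q : U_S p q -> U_S q `<=` U_S p.
Proof. by case: p; case: q => /= H r Hr //; move: H; rewrite /set1 /=. Qed.
HB.instance Definition _ := hasNbhs.Build Spt (alex_nbhs U_S).
HB.instance Definition _ := Nbhs_isNbhsTopological.Build Spt
  (alex_filter U_S_refl) (alex_singleton U_S_refl) (alex_nbhs_nbhs U_S_tr).

Definition iota_fun (e : emp) : pt := match e with end.
Lemma iota_cont : continuous iota_fun. Proof. by case. Qed.
Definition iota_map : cmap := CMap iota_cont.

Definition M_fun (p : Dpt) : Ept :=
  match p with Dx | Dy => Eu | Dz | Dc => Ev end.
Lemma M_cont : continuous M_fun.
Proof.
move=> p A HA; have HA' : forall e, A e by move=> e; apply: HA.
by move=> q _; exact: HA'.
Qed.
Definition M_map : cmap := CMap M_cont.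

Definition k_fun (p : pt) : Spt := Sc.
Lemma k_cont : continuous k_fun.
Proof.
move=> p A HA; have HA' : A Sc by apply: HA.
by move=> q _; exact: HA'.
Qed.
Definition k_map : cmap := CMap k_cont.

(* A map lifts against [k] iff no nonempty open set misses its image, and
   against [M] iff it is injective and closed.  As [k] is such a closed
   embedding and maps with dense image lift against all of them,
   [{M}^ll = {k}^l] is the class of maps with dense image.
   [{iota}^r] is the class of surjections, so every map in [{iota}^rl] has a
   continuous retraction and a closed image.  Hence [{iota}^rll] contains the
   fold [bool -> pt] and the inclusion of a space into the space obtained by
   adjoining a limit point of a proper filter; lifting against these shows
   that the maps in [{iota}^rllr] are closed embeddings, so [M] lies in
   [{iota}^rllrr].  Adjoining to a discrete set, of cardinality beyond that
   of a given space, a limit point of its co-small sets yields a map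
   [pt -> Z] in [{iota}^rllr]; lifting against it, a pigeonhole argument
   shows that the maps in [{iota}^rllrr] lift specializations, i.e.
   [k] lies in [{iota}^rllrrl].  Thus [{iota}^rllrrll] is squeezed between
   [{M}^ll] and [{k}^l]. *)

From HB Require Import structures.
From mathcomp Require Import all_boot all_classical topology.

Set Implicit Arguments.
Unset Strict Implicit.
Unset Printing Implicit Defensive.

Local Open Scope classical_set_scope.

(** * Continuity for finite and discrete spaces *)

Lemma alex_continuous (B T : topologicalType) (U : T -> set T) (f : B -> T) :
  nbhs = alex_nbhs U -> (forall p, nbhs p (f @^-1` U (f p))) -> continuous f.
Proof.
move=> nbhsE fU p A; rewrite /= nbhsE => UA.
by apply: filterS (fU p) => q /UA.
Qed.

Lemma continuous_to_pt (B : topologicalType) (f : B -> pt) : continuous f.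
Proof. by apply: (@alex_continuous _ _ U_pt) => // p; apply: filterT. Qed.

Lemma continuous_from_pt (B : topologicalType) (f : pt -> B) : continuous f.
Proof.
have -> : f = cst (f bullet) by apply/funext => -[].
exact: cst_continuous.
Qed.

Lemma continuous_to_E (B : topologicalType) (f : B -> Ept) : continuous f.
Proof. by apply: (@alex_continuous _ _ U_E) => // p; apply: filterT. Qed.

Lemma alex_open (T : topologicalType) (U : T -> set T) (A : set T) :
  nbhs = alex_nbhs U -> (forall p, A p -> U p `<=` A) -> open A.
Proof. by move=> nbhsE AU; rewrite openE => p /AU; rewrite /interior nbhsE. Qed.

Lemma open_So : open [set So].
Proof. by apply: (@alex_open _ U_S) => // p ->. Qed.

Lemma continuous_to_S (B : topologicalType) (f : B -> Spt) :
  open (f @^-1` [set So]) -> continuous f.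
Proof.
move=> oSo; apply: (@alex_continuous _ _ U_S) => // p.
case E: (f p); last exact: filterT.
by apply: open_nbhs_nbhs; split.
Qed.

Lemma continuous_S_specialization (Y : topologicalType) (b : Spt -> Y) :
  continuous b -> forall N, nbhs (b Sc) N -> N (b So).
Proof. by move=> bc N /bc /(_ So I). Qed.

Lemma continuous_from_S (X : topologicalType) (x1 x0 : X) :
  (forall N, nbhs x0 N -> N x1) ->
  continuous (fun s => if s is So then x1 else x0).
Proof.
move=> x0x1 p A /= HA; rewrite (_ : nbhs = alex_nbhs U_S) //.
by case: p HA => HA [] //= _; [exact: nbhs_singleton|exact: x0x1|
  exact: nbhs_singleton].
Qed.

Lemma discrete_continuous (T : discreteTopologicalType) (U : topologicalType)
  (f : T -> U) : continuous f.
Proof.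
move=> x A /nbhs_singleton Afx.
by rewrite nbhs_principalE; apply/principal_filterP.
Qed.

Lemma clopen_indicator_continuous (T : topologicalType) (K : set T) :
  clopen K -> continuous (fun p => `[< K p >] : bool).
Proof.
move=> [oK cK] p A /nbhs_singleton; have oNK : open (~` K) by rewrite openC.
case: (asboolP (K p)) => Kp Afp.
  by apply: filterS (open_nbhs_nbhs (conj oK Kp)) => q Kq /=; rewrite asboolT.
by apply: filterS (open_nbhs_nbhs (conj oNK Kp)) => q Kq /=; rewrite asboolF.
Qed.

(** * Lifting against [k] and [M] *)

Lemma lifts_k_dense f : lifts f k_map <-> dense_image f.
Proof.
split=> [fk O [x Ox] oO | fd t b _ bc kt].
  apply: contrapT => Odisj.
  pose b p := if `[< O p >] then So else Sc.
  have bc : continuous b.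
    apply: continuous_to_S; rewrite (_ : _ @^-1` _ = O) //.
    by apply/seteqP; split=> p; rewrite /b /=; case: asboolP.
  have [|d [_ _ /(congr1 (fun h => h x))]] :=
      fk (fun _ => bullet) b (@cst_continuous _ _ bullet) bc.
    apply/funext => a; rewrite /= /b asboolF // => Ofa.
    by apply: Odisj; exists (cfun f a); split => //; exists a.
  by rewrite /= /b asboolT.
exists (fun _ => bullet); split.
- exact: cst_continuous.
- by apply/funext => a; case: (t a).
apply/funext => y /=; case E: (b y) => //.
have [z [bSo [a _ faz]]] := fd (b @^-1` [set So]) (ex_intro _ y E)
  (proj1 (continuousP b) bc _ open_So).
by move: bSo; rewrite /= -faz -[b _]/((b \o cfun f) a) -kt.
Qed.

Lemma closed_Dc : closed [set Dc].
Proof.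
rewrite -openC; apply: (@alex_open _ U_D) => // p.
by case: p => [| | | /(_ erefl)] // _ q.
Qed.

Lemma continuous_to_DP (B : topologicalType) (d : B -> Dpt) :
  continuous d <-> closed (d @^-1` [set Dc]).
Proof.
split=> [/continuous_closedP/(_ _ closed_Dc) //|dc].
have oD : open (~` (d @^-1` [set Dc])) by rewrite openC.
apply: (@alex_continuous _ _ U_D) => // p.
by case E: (d p); [| | |exact: filterT];
  apply: open_nbhs_nbhs; split=> //=; rewrite E.
Qed.

Definition closed_embedding (g : cmap) : Prop :=
  injective (cfun g) /\ forall F, closed F -> closed (cfun g @` F).

Lemma closed_embedding_lifts_M g : closed_embedding g -> lifts g M_map.
Proof.
case=> ginj gcl t b tc _ Mtb.
pose d p := if pselect (range (cfun g) p) is left gp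
            then t (s2val (cid2 gp))
            else if b p is Eu then Dx else Dz.
have dg a : d (cfun g a) = t a.
  rewrite /d; case: pselect => [gp|[]]; last by exists a.
  by case: cid2 => a' /= _ /ginj ->.
have dNg p : ~ range (cfun g) p -> d p = if b p is Eu then Dx else Dz.
  by rewrite /d; case: pselect.
exists d; split.
- apply/continuous_to_DP.
  rewrite (_ : _ @^-1` _ = cfun g @` (t @^-1` [set Dc])).
    by apply/gcl/continuous_to_DP.
  apply/seteqP; split=> [p|_ [a ta <-]]; last by rewrite /= dg.
  case: (pselect (range (cfun g) p)) => [[a _ <-]|gp].
    by rewrite /= dg; exists a.
  by rewrite /= dNg //; case: (b p).
- by apply/funext => a; rewrite /= dg.
apply/funext => p /=; case: (pselect (range (cfun g) p)) => [[a _ <-]|gp].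
  by rewrite dg -[M_fun _]/((M_fun \o t) a) Mtb.
by rewrite dNg //; case: (b p).
Qed.

Lemma lifts_M_closed_embedding g : lifts g M_map -> closed_embedding g.
Proof.
move=> gM.
have ginj : injective (cfun g).
  move=> a1 a2 g12; apply: contrapT => a12.
  pose t a := if `[< a = a2 >] then Dy else Dx.
  have tc : continuous t.
    apply/continuous_to_DP.
    rewrite (_ : _ @^-1` _ = set0); first exact: closed0.
    by apply/seteqP; split=> a //=; rewrite /t; case: asboolP.
  have [|d [_ dg _]] := gM t (fun _ => Eu) tc (@continuous_to_E _ _).
    by apply/funext => a /=; rewrite /t; case: asboolP.
  have := congr1 (fun h => h a1) dg; rewrite /= g12.
  by rewrite -[d _]/((d \o cfun g) a2) dg /t /= asboolT // asboolF.
split=> // F Fcl.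
pose t a := if `[< F a >] then Dc else Dx.
pose b p := if `[< (cfun g @` F) p >] then Ev else Eu.
have tc : continuous t.
  apply/continuous_to_DP; rewrite (_ : _ @^-1` _ = F) //.
  by apply/seteqP; split=> a; rewrite /t /=; case: asboolP.
have [|d [dc dg gd]] := gM t b tc (@continuous_to_E _ _).
  apply/funext => a; rewrite /= /t /b.
  case: (asboolP (F a)) => [Fa|nFa]; first by rewrite asboolT //; exists a.
  by rewrite asboolF // => -[a' Fa' /ginj a'a]; apply: nFa; rewrite -a'a.
rewrite (_ : _ @` _ = d @^-1` [set Dc]); first exact/continuous_to_DP.
apply/seteqP; split=> [_ [a Fa <-]|p /= dp].
  by rewrite /= -[d _]/((d \o cfun g) a) dg /t /= asboolT.
have := congr1 (fun h => h p) gd; rewrite /= dp /b.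
by case: asboolP.
Qed.

Lemma dense_closed_setT (T : topologicalType) (S A : set T) :
  dense S -> closed A -> S `<=` A -> A = setT.
Proof.
move=> Sd Acl SA; apply/seteqP; split=> // p _; apply: contrapT => nAp.
have oA : open (~` A) by rewrite openC.
by have [q [nAq /SA]] := Sd (~` A) (ex_intro _ p nAp) oA.
Qed.

Lemma dense_lifts_closed_embedding f h :
  dense_image f -> closed_embedding h -> lifts f h.
Proof.
move=> fd [hinj hcl] t b tc bc htb.
have bh p : range (cfun h) (b p).
  suff /seteqP[_ /(_ p I)] : b @^-1` range (cfun h) = setT by [].
  apply: (dense_closed_setT fd).
    by move/continuous_closedP: bc; apply; apply/hcl/closedT.
  move=> _ [a _ <-] /=; exists (t a) => //.
  by rewrite -[_ (t a)]/((_ \o t) a) htb.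
pose d p := s2val (cid2 (bh p)).
have hd p : cfun h (d p) = b p by rewrite /d; case: cid2.
exists d; split.
- apply/continuous_closedP => F Fcl.
  rewrite (_ : _ @^-1` _ = b @^-1` (cfun h @` F)).
    by move/continuous_closedP: bc; apply; apply: hcl.
  apply/seteqP; split=> p /=; first by exists (d p).
  by case=> x Fx; rewrite -hd => /hinj <-.
- apply/funext => a /=; apply: hinj.
  by rewrite hd -[_ (t a)]/((_ \o t) a) htb.
- by apply/funext => p /=.
Qed.

Lemma closed_embedding_k : closed_embedding k_map.
Proof.
split=> [[] [] //|F _].
have [Fb|nFb] := pselect (F bullet).
  rewrite (_ : _ @` _ = [set Sc]).
    rewrite -openC (_ : ~` _ = [set So]); first exact: open_So.
    by apply/seteqP; split=> -[] //= /(_ erefl).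
  by apply/seteqP; split=> [_ [x _ <-]|_ ->] //; exists bullet.
rewrite (_ : _ @` _ = set0); first exact: closed0.
by apply/seteqP; split=> // p [[] Fb _].
Qed.

Lemma lorth_lorth_M_dense f :
  orthw (single M_map) [:: l_; l_] f <-> dense_image f.
Proof.
split=> [fM | fd h hM].
  apply/lifts_k_dense/fM => g ->.
  exact/closed_embedding_lifts_M/closed_embedding_k.
exact/(dense_lifts_closed_embedding fd)/lifts_M_closed_embedding/hM.
Qed.

(** * The classes generated by [iota] *)

Definition iota_r : mclass := rorth (single iota_map).
Definition iota_rl : mclass := lorth iota_r.
Definition iota_rll : mclass := lorth iota_rl.
Definition iota_rllr : mclass := rorth iota_rll.
Definition iota_rllrr : mclass := rorth iota_rllr.
Definition iota_rllrrl : mclass := lorth iota_rllrr.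
Definition iota_rllrrll : mclass := lorth iota_rllrrl.

Lemma iota_rP g : iota_r g <-> forall y, exists x, cfun g x = y.
Proof.
split=> [gi y | gsurj _ -> t b _ _ _].
  have [|d [_ _ /(congr1 (fun h => h bullet)) /= <-]] :=
      gi _ erefl (fun e : emp => match e with end) (fun _ => y)
        (fun e => match e with end) (@cst_continuous _ _ y).
    by apply/funext => -[].
  by exists (d bullet).
have [x gx] := gsurj (b bullet).
exists (fun _ => x); split.
- exact: cst_continuous.
- by apply/funext => -[].
- by apply/funext => -[].
Qed.

Lemma iota_rl_retraction g : iota_rl g -> csrc g ->
  exists r : ctgt g -> csrc g, continuous r /\ cancel (cfun g) r.
Proof.
move=> gl x0.
have [|r [rc rg _]] :=
  gl (CMap (@continuous_to_pt (csrc g) (fun _ => bullet))) _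
    id (fun _ => bullet) (fun _ _ => id) (@continuous_to_pt _ _) erefl.
  by apply/iota_rP => -[]; exists x0.
by exists r; split=> // x; rewrite -[r _]/((r \o cfun g) x) rg.
Qed.

Lemma iota_rl_injective g : iota_rl g -> injective (cfun g).
Proof.
move=> gl x1 x2 g12; have [r [_ gr]] := iota_rl_retraction gl x1.
by rewrite -(gr x1) g12 gr.
Qed.

Definition isolate (Y : topologicalType) (y : Y) : Type := Y.

Section IsolatePoint.
Variables (Y : topologicalType) (y : Y).

Definition isolate_nbhs (p : Y) (A : set Y) : Prop :=
  A p /\ (p <> y -> nbhs p (A `|` [set y])).

Lemma isolate_nbhs_filter p : ProperFilter (isolate_nbhs p).
Proof.
apply: Build_ProperFilter_ex; first by move=> A [Ap _]; exists p.
split=> [|A B [Ap NA] [Bp NB]|A B AB [Ap NA]].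
- by split=> // _; apply: filterS filterT => q _; left.
- split=> // py; apply: filterS2 (NA py) (NB py) => q.
  by case=> [Aq|->]; [case=> [Bq|->]; [left|right]|right].
- split; first exact: AB.
  by move=> py; apply: filterS (NA py) => q [/AB|->]; [left|right].
Qed.

Lemma isolate_nbhs_singleton p A : isolate_nbhs p A -> A p.
Proof. by case. Qed.

Lemma isolate_nbhs_nbhs p A :
  isolate_nbhs p A -> isolate_nbhs p (isolate_nbhs^~ A).
Proof.
case=> Ap NA; split=> // py; apply: filterS (nbhs_interior (NA py)) => q Nq.
have [->|qy] := pselect (q = y); [right|left] => //.
split=> [|_]; last exact: Nq.
by case: (nbhs_singleton Nq) => // /qy.
Qed.

End IsolatePoint.

HB.instance Definition _ (Y : topologicalType) (y : Y) :=
  Choice.copy (isolate y) Y.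
HB.instance Definition _ (Y : topologicalType) (y : Y) :=
  hasNbhs.Build (isolate y) (isolate_nbhs y).
HB.instance Definition _ (Y : topologicalType) (y : Y) :=
  Nbhs_isNbhsTopological.Build (isolate y) (@isolate_nbhs_filter Y y)
    (@isolate_nbhs_singleton Y y) (@isolate_nbhs_nbhs Y y).

Lemma isolate_id_continuous (Y : topologicalType) (y : Y) :
  continuous (fun p : isolate y => p : Y).
Proof.
move=> p N Np; split=> [|_]; first exact: nbhs_singleton Np.
by apply: filterS Np => q; left.
Qed.

Lemma iota_rl_closed_range g : iota_rl g -> closed (range (cfun g)).
Proof.
move=> gl y yrange; apply: contrapT => ny.
(* The identity [isolate y -> Y] is surjective, and a lift of [id] along it
   makes [y] isolated in [Y]. *)
have gc : continuous (fun x => cfun g x : isolate y).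
  move=> x A [_ gA].
  have gxy : cfun g x <> y by move=> gxy; apply: ny; exists x.
  have N : nbhs x (cfun g @^-1` (A `|` [set y])) := @cfun_cont g x _ (gA gxy).
  apply: filterS N => q /= [//|gqy].
  by case: ny; exists q.
have [|d [dc _ did]] :=
  gl (CMap (@isolate_id_continuous _ y)) _ (fun x => cfun g x : isolate y) id
    gc (fun _ _ => id) erefl.
  by apply/iota_rP => q; exists q.
have : nbhs y [set y].
  have dq q : d q = q := congr1 (fun h => h q) did.
  have Ny : nbhs (d y) [set y : isolate y].
    by rewrite dq; split=> // /(_ erefl).
  have dNy : nbhs y (d @^-1` [set y]) := dc y _ Ny.
  by apply: filterS dNy => q /=; rewrite dq.
move=> /yrange [z [[x _ gxz] zy]].
by apply: ny; exists x; rewrite // gxz zy.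
Qed.

Definition false_point : cmap :=
  CMap (@continuous_from_pt bool (fun _ => false)).

Lemma iota_rl_false_point : iota_rl false_point.
Proof.
move=> g /iota_rP gsurj t b _ _ gtb.
have [x gx] := gsurj (b true).
exists (fun q : bool => if q then x else t bullet); split.
- exact: discrete_continuous.
- by apply/funext => -[].
- by apply/funext => -[] //=; exact: (congr1 (fun h => h bullet) gtb).
Qed.

Lemma iota_rll_clopen f K : iota_rll f -> clopen K ->
  K `&` range (cfun f) = set0 -> K = set0.
Proof.
move=> fl Kclopen Kf; apply/seteqP; split=> // p Kp.
have [|d [_ _ /(congr1 (fun h => h p))]] :=
  fl _ iota_rl_false_point (fun _ => bullet) _ (@continuous_to_pt _ _)
    (clopen_indicator_continuous Kclopen).
  apply/funext => a /=; rewrite asboolF // => Kfa.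
  by rewrite -[False]/(set0 (cfun f a)) -Kf; split=> //; exists a.
by rewrite /= asboolT.
Qed.

Definition collapse_bool : cmap :=
  CMap (@continuous_to_pt bool (fun _ => bullet)).

Lemma iota_rll_collapse_bool : iota_rll collapse_bool.
Proof.
move=> h /iota_rl_injective hinj t b _ _ htb.
have ht q : cfun h (t q) = b bullet := congr1 (fun k => k q) htb.
exists (fun _ => t true); split.
- exact: cst_continuous.
- by apply/funext => q /=; apply: hinj; rewrite !ht.
- by apply/funext => -[] /=.
Qed.

(** * Adjoining a limit point of a filter *)

Definition adjoin_limit (C : topologicalType) (G : pfilter_on C) : Type :=
  option C.

Section AdjoinLimitPoint.
Variables (C : topologicalType) (G : pfilter_on C).

Definition adjoin_limit_nbhs (p : option C) (A : set (option C)) : Prop :=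
  if p is Some x then nbhs x (A \o Some)
  else A None /\ G (fun x => nbhs x (A \o Some)).

Lemma adjoin_limit_nbhs_filter p : ProperFilter (adjoin_limit_nbhs p).
Proof.
apply: Build_ProperFilter_ex.
  case: p => [x|] A; last by case; exists None.
  by move/nbhs_singleton; exists (Some x).
case: p => [x|]; split=> /=.
- exact: filterT.
- by move=> A B; apply: filterI.
- by move=> A B AB; apply: filterS => y /AB.
- by split=> //; apply: filterS filterT => x _; apply: filterT.
- move=> A B [AN GA] [BN GB]; split=> //.
  by apply: filterS2 GA GB => x; apply: filterI.
- move=> A B AB [AN GA]; split; first exact: AB.
  by apply: filterS GA => x; apply: filterS => y /AB.
Qed.

Lemma adjoin_limit_nbhs_singleton p A : adjoin_limit_nbhs p A -> A p.
Proof. by case: p => [x /nbhs_singleton|[]]. Qed.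

Lemma adjoin_limit_nbhs_nbhs p A :
  adjoin_limit_nbhs p A -> adjoin_limit_nbhs p (adjoin_limit_nbhs^~ A).
Proof.
case: p => [x /nbhs_interior //|[AN GA]]; split=> //.
by apply: filterS GA => x /nbhs_interior.
Qed.

End AdjoinLimitPoint.

HB.instance Definition _ (C : topologicalType) (G : pfilter_on C) :=
  Choice.copy (adjoin_limit G) (option C).
HB.instance Definition _ (C : topologicalType) (G : pfilter_on C) :=
  hasNbhs.Build (adjoin_limit G) (adjoin_limit_nbhs G).
HB.instance Definition _ (C : topologicalType) (G : pfilter_on C) :=
  Nbhs_isNbhsTopological.Build (adjoin_limit G)
    (@adjoin_limit_nbhs_filter C G) (@adjoin_limit_nbhs_singleton C G)
    (@adjoin_limit_nbhs_nbhs C G).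

Section AdjoinLimitMaps.
Variables (C : topologicalType) (G : pfilter_on C).

Lemma adjoin_limit_nbhsE : @nbhs _ (adjoin_limit G) = adjoin_limit_nbhs G.
Proof. by []. Qed.

Definition adjoin_incl (x : C) : adjoin_limit G := Some x.

Lemma adjoin_incl_continuous : continuous adjoin_incl.
Proof. by move=> x A. Qed.

Definition adjoin_extend (Y : Type) (g : C -> Y) (q : Y) (p : adjoin_limit G) :=
  if p is Some x then g x else q.

Lemma adjoin_extend_continuous (Y : topologicalType) (g : C -> Y) (q : Y) :
  continuous g -> g @ (G : set_system C) --> q ->
  continuous (adjoin_extend g q).
Proof.
move=> gc gq [x|] N /= Nq; first exact: gc.
split; first exact: nbhs_singleton Nq.
have GN : G (g @^-1` N°) := gq _ (nbhs_interior Nq).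
by apply: filterS GN => x /gc.
Qed.

Lemma adjoin_limit_cvg (Y : topologicalType) (d : adjoin_limit G -> Y) :
  continuous d -> d \o adjoin_incl @ (G : set_system C) --> d None.
Proof.
move=> dc N /dc [_ GN].
by apply: filterS GN => x /nbhs_singleton.
Qed.

Lemma iota_rll_adjoin_incl : iota_rll (CMap adjoin_incl_continuous).
Proof.
move=> h hl t b _ bc htb.
have [x0 _] := filter_ex (filterT : G setT).
have [r [rc rh]] := iota_rl_retraction hl (t x0).
have bh p : range (cfun h) (b p).
  have hbx x : range (cfun h) (b (Some x)).
    by exists (t x) => //; exact: (congr1 (fun k => k x) htb).
  case: p => [x|]; first exact: hbx.
  apply: (closed_cvg _ (iota_rl_closed_range hl)) (adjoin_limit_cvg bc).
  exact: nearW.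
exists (r \o b); split.
- by move=> p; apply: continuous_comp; [exact: bc|exact: rc].
- by apply/funext => x /=; rewrite -[b _]/((b \o adjoin_incl) x) -htb /= rh.
- by apply/funext => p /=; have [y _ <-] := bh p; rewrite rh.
Qed.

End AdjoinLimitMaps.

Lemma iota_rllr_injective g : iota_rllr g -> injective (cfun g).
Proof.
move=> gr c1 c2 g12.
have [|d [_ dt _]] := gr _ iota_rll_collapse_bool
  (fun q : bool => if q then c1 else c2) (fun _ => cfun g c1)
  (@discrete_continuous _ _ _) (@continuous_from_pt _ _).
  by apply/funext => -[].
have dc1 : d bullet = c1 := congr1 (fun k => k true) dt.
have dc2 : d bullet = c2 := congr1 (fun k => k false) dt.
by rewrite -dc1 -dc2.
Qed.

Lemma iota_rllr_closed_map g F :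
  iota_rllr g -> closed F -> closed (cfun g @` F).
Proof.
move=> gr Fcl q qcl.
(* Adjoin to [csrc g] a limit point of the trace on [F] of the neighbourhoods
   of [q]; the lift sends it to a point of [F] above [q]. *)
pose G := filter_from (nbhs q) (fun V => F `&` cfun g @^-1` V).
have Gfilter : Filter G.
  apply: filter_from_filter; first by exists setT; apply: filterT.
  move=> V W NV NW; exists (V `&` W); first exact: filterI.
  by move=> x [Fx [Vgx Wgx]]; split; split.
have Gproper : ProperFilter G.
  apply: filter_from_proper => V /qcl [_ [[x Fx <-] Vgx]].
  by exists x.
pose Gp := PFilterPack G Gproper.
have gq : cfun g @ (Gp : set_system _) --> q.
  by move=> V NV; exists V => // x [].
have [|d [dc dincl gd]] := gr _ (@iota_rll_adjoin_incl _ Gp) id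
  (adjoin_extend (cfun g) q) (fun _ _ => id)
  (adjoin_extend_continuous (@cfun_cont g) gq).
  by apply/funext.
exists (d None); last exact: (congr1 (fun k => k None) gd).
apply: (closed_cvg _ Fcl) (adjoin_limit_cvg dc).
exists setT; first exact: filterT.
by move=> x [Fx _] /=; rewrite -[d _]/((d \o adjoin_incl Gp) x) dincl.
Qed.

Lemma iota_rllr_closed_embedding g : iota_rllr g -> closed_embedding g.
Proof.
move=> gr; split=> [|F]; first exact: iota_rllr_injective.
exact: iota_rllr_closed_map.
Qed.

Lemma iota_rllrr_M : iota_rllrr M_map.
Proof. by move=> g /iota_rllr_closed_embedding /closed_embedding_lifts_M. Qed.

(* The words over [bool + X] index small families: a [bool] letter tags one
   of two families and an [X] letter one of [X] many, so small families are
   closed under such unions, while [setT] is not small by Cantor's argument. *)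
Section SmallSets.
Variable X : Type.
Implicit Types A B : set (set (seq (bool + X))).

Definition small A := exists e : seq (bool + X) -> set (seq (bool + X)),
  A `<=` range e.

Lemma small_sub A B : small B -> A `<=` B -> small A.
Proof. by move=> [e Be] AB; exists e => j /AB /Be. Qed.

Lemma small_set1 j : small [set j].
Proof. by exists (fun _ => j) => _ ->; exists [::]. Qed.

Lemma smallU A B : small A -> small B -> small (A `|` B).
Proof.
move=> [e1 Ae1] [e2 Ae2].
exists (fun w => if w is inl b :: w' then (if b then e1 else e2) w' else set0).
move=> j [/Ae1 [w _ <-]|/Ae2 [w _ <-]]; first by exists (inl true :: w).
by exists (inl false :: w).
Qed.

Lemma small_bigcup (F : X -> set (set (seq (bool + X)))) :
  (forall x, small (F x)) -> small (\bigcup_x F x).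
Proof.
move=> /choice [e Fe].
exists (fun w => if w is inr x :: w' then e x w' else set0).
by move=> j [x _ /Fe [w _ <-]]; exists (inr x :: w).
Qed.

Lemma not_small_setT : ~ small setT.
Proof.
move=> [e /(_ (fun w => ~ e w w) I) [w _ ew]].
have nww : ~ e w w by move=> eww; move: (eww); rewrite {1}ew; apply.
by apply: (nww); rewrite ew.
Qed.

Lemma exists_not_small_fiber (d : set (seq (bool + X)) -> X) :
  exists x, ~ small (d @^-1` [set x]).
Proof.
apply: contrapT => /forallNP allsmall; apply: not_small_setT.
apply: (small_sub (small_bigcup (fun x => contrapT (allsmall x)))).
by move=> j _; exists (d j).
Qed.

Definition cosmall : set_system (discrete_topology (set (seq (bool + X)))) :=
  fun A => small (~` A).

Lemma cosmall_proper : ProperFilter cosmall.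
Proof.
apply: Build_ProperFilter.
  by rewrite /cosmall setC0; exact: not_small_setT.
split=> [|A B sA sB|A B AB sA].
- by rewrite /cosmall setCT; apply: small_sub (small_set1 set0) _.
- by apply: small_sub (smallU sA sB) _; rewrite setCI.
- by apply: small_sub sA _; apply: subsetC.
Qed.

Definition cosmall_pfilter := PFilterPack cosmall cosmall_proper.

End SmallSets.

Section LimitPoint.
Variable X : Type.
Local Notation Z := (adjoin_limit (cosmall_pfilter X)).

Definition limit_point_map : cmap :=
  CMap (@continuous_from_pt Z (fun _ => None)).

Lemma clopen_Some j : clopen [set Some j : Z].
Proof.
split; last rewrite -openC; rewrite openE.
  move=> _ ->; rewrite /interior adjoin_limit_nbhsE /= nbhs_principalE.
  exact/principal_filterP.
move=> -[i /= ij|_]; rewrite /interior adjoin_limit_nbhsE /=.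
  by rewrite nbhs_principalE; apply/principal_filterP.
split=> //; apply: small_sub (small_set1 j) _ => i /= nNi.
apply: contrapT => ij; apply: nNi; rewrite nbhs_principalE.
by apply/principal_filterP => -[] /ij.
Qed.

Lemma iota_rllr_limit_point : iota_rllr limit_point_map.
Proof.
move=> f fl t b _ bc bft.
have bNone p : b p = None.
  case E: (b p) => [j|] //; exfalso.
  have Kclopen : clopen (b @^-1` [set Some j]).
    have [oj cj] := clopen_Some j.
    split; first exact: (proj1 (continuousP b) bc _ oj).
    exact: (proj1 (continuous_closedP b) bc _ cj).
  suff K0 : b @^-1` [set Some j] = set0 by rewrite -[False]/(set0 p) -K0.
  apply: (iota_rll_clopen fl Kclopen).
  apply/seteqP; split=> // q [/= bq [a _ faq]].
  by move: bq; rewrite -faq -[b _]/((b \o cfun f) a) -bft.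
exists (fun _ => bullet); split.
- exact: cst_continuous.
- by apply/funext => a; case: (t a).
- by apply/funext => p /=; rewrite bNone.
Qed.

End LimitPoint.

Lemma iota_rllrrl_k : iota_rllrrl k_map.
Proof.
move=> h hrr t b tc bc htb; set x0 := t bullet.
have hx0 : cfun h x0 = b Sc := congr1 (fun k => k bullet) htb.
pose b' : adjoin_limit (cosmall_pfilter (csrc h)) -> ctgt h :=
  adjoin_extend (fun _ => b So) (b Sc).
have b'c : continuous b'.
  apply: adjoin_extend_continuous; first exact: cst_continuous.
  move=> N /(continuous_S_specialization bc) NbSo.
  exact: (@filterE _ (cosmall_pfilter (csrc h)) _ _ (fun _ => NbSo)).
have [|d [dc dt hd]] := hrr _ (@iota_rllr_limit_point (csrc h)) t b' tc b'c.
  by apply/funext => -[]; rewrite /= hx0.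
have dx0 : d None = x0 := congr1 (fun k => k bullet) dt.
have [x1 x1fib] := exists_not_small_fiber (fun j => d (Some j)).
(* The fibre over [x1] is not small, so it meets every cosmall set. *)
have x0x1 N : nbhs x0 N -> N x1.
  rewrite -dx0 => /(adjoin_limit_cvg dc) dN; apply: contrapT => nNx1.
  have : small (~` [set j | N (d (Some j))]) := dN.
  by move/small_sub => fib; apply/x1fib/fib => j /= ->.
have hx1 : cfun h x1 = b So.
  have [j djx1] : exists j, d (Some j) = x1.
    apply: contrapT => /forallNP nfib; apply: x1fib.
    by apply: small_sub (small_set1 set0) _ => j /nfib.
  by rewrite -djx1; exact: (congr1 (fun k => k (Some j)) hd).
exists (fun s => if s is So then x1 else x0); split.
- exact: continuous_from_S.
- by apply/funext => -[].
- by apply/funext => -[].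
Qed.

Lemma iota_rllrrll_dense f : iota_rllrrll f <-> dense_image f.
Proof.
split=> [fl | fd h hl].
  exact/lifts_k_dense/fl/iota_rllrrl_k.
apply: (dense_lifts_closed_embedding fd).
exact/lifts_M_closed_embedding/hl/iota_rllrr_M.
Qed.

Theorem mainTheorem16 :
  [/\ same_class (orthw (single iota_map) [:: r_; l_; l_; r_; r_; l_; l_])
                 (orthw (single M_map) [:: l_; l_]),
      same_class (orthw (single M_map) [:: l_; l_]) (orthw (single k_map) [:: l_])
    & same_class (orthw (single k_map) [:: l_]) dense_image].
Proof.
have lorth_k_dense f : orthw (single k_map) [:: l_] f <-> dense_image f.
  by rewrite -lifts_k_dense; split=> [fk|fk _ ->]; first exact: fk.
split=> f.
- by rewrite lorth_lorth_M_dense; exact: iota_rllrrll_dense.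
- by rewrite lorth_lorth_M_dense lorth_k_dense.
- exact: lorth_k_dense.
Qed.
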